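(* Assume the setting described in the context (hypotheses on $f,v,\eta$, the mesh condition $h<1/C$ and the CFL condition). If $\rho^o_j \geq 0$ for all $j\in\mathbb{Z}$, then the approximate solution constructed by the scheme satisfies $\rho^n_j \geq 0$ for all $j\in\mathbb{Z}$ and all $n\in\mathbb{N}$.
   Context: Let $C>0$ and let $f\in C^2(\mathbb{R}^+\times\mathbb{R}\times\mathbb{R};\mathbb{R})$ satisfy $\sup_{t,x,\rho}|\partial_\rho f(t,x,\rho)|<+\infty$, $\sup_{t,x}|\partial_x f(t,x,\rho)|< C|\rho|$ and $\sup_{t,x}|\partial^2_{xx} f(t,x,\rho)|< C|\rho|$ for all $\rho$, and $f(t,x,0)=0$ for all $t,x$. Let $v\in (C^2\cap W^{1,\infty})(\mathbb{R};\mathbb{R})$ and $\eta\in (C^2\cap W^{2,\infty})(\mathbb{R};\mathbb{R})$. These are the data of the nonlocal conservation law $\partial_t\rho+\partial_x\big(f(t,x,\rho)\,v(\rho*\eta)\big)=0$, $\rho(0,x)=\rho^o(x)$, with $\rho^o\in L^\infty(\mathbb{R})$. Numerical scheme: fix a space step $h>0$ and time step $\tau>0$, set $\lambda=\tau/h$, $x_j=jh$, $x_{j+1/2}=(j+\tfrac12)h$, $t^n=n\tau$. Assume $h<1/C$ and the CFL condition $\lambda\,(1+2\|\partial_\rho f\|_{L^\infty})\|v\|_{L^\infty}\le 1/6$. Set $\rho^o_j=\frac1h\int_{x_{j-1/2}}^{x_{j+1/2}}\rho^o(x)\,dx$ and $\rho^{n+1}_j=\rho^n_j-\lambda\big(\mathbf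 f^n_{j+1/2}(\rho^n_j,\rho^n_{j+1})-\mathbf f^n_{j-1/2}(\rho^n_{j-1},\rho^n_j)\big)$, where $\mathbf f^n_{j+1/2}(\rho_1,\rho_2)=\frac{f(t^n,x_{j+1/2},\rho_1)+f(t^n,x_{j+1/2},\rho_2)}{2}\,v(c^n_{j+1/2})-\frac{1}{6\lambda}(\rho_2-\rho_1)$, $c^n_{j+1/2}=\sum_{k\in\mathbb{Z}} h\,\rho^n_{k+1/2}\,\eta_{j+1/2-k}$, with $\rho^n_{k+1/2}$ a convex combination of $\rho^n_k$ and $\rho^n_{k+1}$, and $\eta_{m+1/2}=\frac1h\int_{x_m}^{x_{m+1}}\eta(x)\,dx$ for $m\in\mathbb{Z}$. *)

From HB Require Import structures.
From mathcomp Require Import all_boot all_order all_algebra.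
From mathcomp Require Import all_classical all_reals all_analysis.
Set Implicit Arguments. Unset Strict Implicit. Unset Printing Implicit Defensive.
Import Order.TTheory GRing.Theory Num.Theory.
Import numFieldNormedType.Exports.
Local Open Scope classical_set_scope.
Local Open Scope ring_scope.

Section Defs.
Variable R : realType.

Definition pd (i : nat) (g : R -> R -> R -> R) : R -> R -> R -> R :=
  fun t x r => match i with
               | 0%N => derive1 (fun s => g s x r) t
               | 1%N => derive1 (fun s => g t s r) x
               | _ => derive1 (fun s => g t x s) r
               end.

Definition ex_pd (i : nat) (g : R -> R -> R -> R) (t x r : R) : Prop :=
  match i with
  | 0%N => derivable (fun s => g s x r) t 1
  | 1%N => derivable (fun s => g t s r) x 1
  | _ => derivable (fun s => g t x s) r 1
  end.

Definition cont3 (g : R -> R -> R -> R) : Prop :=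
  continuous (fun p : R * R * R => g p.1.1 p.1.2 p.2).

Definition C2_3 (f : R -> R -> R -> R) : Prop :=
  cont3 f /\
  (forall i : nat, (i < 3)%N ->
     (forall t x r, ex_pd i f t x r) /\ cont3 (pd i f)) /\
  (forall i j : nat, (i < 3)%N -> (j < 3)%N ->
     (forall t x r, ex_pd j (pd i f) t x r) /\ cont3 (pd j (pd i f))).

Definition C2_1 (g : R -> R) : Prop :=
  (forall x, derivable g x 1) /\ (forall x, derivable (derive1 g) x 1) /\
  continuous (derive1 (derive1 g)).

Definition Linfty (g : R -> R) : Prop :=
  measurable_fun setT g /\
  exists M : R, {ae (@lebesgue_measure R), forall x, `|g x| <= M}.

Definition supnorm_drho (f : R -> R -> R -> R) : R :=
  sup [set `|pd 2 f p.1.1 p.1.2 p.2| | p in [set p : R * R * R | 0 <= p.1.1]].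

Definition supnorm (g : R -> R) : R := sup [set `|g x| | x in [set: R]].

(* sum over k in Z, as the limit of symmetric partial sums *)
Definition zsum (a : int -> R) : R :=
  limn (fun N : nat => \sum_(0 <= i < N) (a (Posz i) + a (Negz i))).

Definition init_avg (rho0 : R -> R) (h : R) (j : int) : R :=
  h^-1 * \int[@lebesgue_measure R]_(x in `[(j%:~R - 2^-1) * h, (j%:~R + 2^-1) * h])
            rho0 x.

Definition eta_half (eta : R -> R) (h : R) (m : int) : R :=
  h^-1 * \int[@lebesgue_measure R]_(x in `[m%:~R * h, (m + 1)%:~R * h]) eta x.

Definition numflux (f : R -> R -> R -> R) (v : R -> R) (h tau : R)
  (n : nat) (j : int) (c rho1 rho2 : R) : R :=
  (f (n%:R * tau) ((j%:~R + 2^-1) * h) rho1 + f (n%:R * tau) ((j%:~R + 2^-1) * h) rho2) / 2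
    * v c - (6 * (tau / h))^-1 * (rho2 - rho1).

Definition conv_c (eta : R -> R) (h : R) (theta : int -> R) (rho : int -> R) (j : int) : R :=
  zsum (fun k => h * (theta k * rho k + (1 - theta k) * rho (k + 1)) * eta_half eta h (j - k)).

Fixpoint scheme (f : R -> R -> R -> R) (v eta rho0 : R -> R) (h tau : R)
  (theta : nat -> int -> R) (n : nat) : int -> R :=
  match n with
  | 0%N => init_avg rho0 h
  | m.+1 => let rho := scheme f v eta rho0 h tau theta m in
            fun j => rho j - (tau / h) *
              (numflux f v h tau m j (conv_c eta h (theta m) rho j) (rho j) (rho (j + 1))
               - numflux f v h tau m (j - 1) (conv_c eta h (theta m) rho (j - 1))
                         (rho (j - 1)) (rho j))
  end.

End Defs.

(** The update of the scheme is the value ρ_j minus λ times a difference of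
    Lax–Friedrichs-type fluxes whose viscosity coefficient is 1/(6λ).  Its
    viscous part is the convex combination (2/3) ρ_j + (1/6) ρ_{j-1} + (1/6) ρ_{j+1}.
    Since f(t, x, 0) = 0 and |∂_ρ f| ≤ ‖∂_ρ f‖, each convective term is bounded by
    λ ‖∂_ρ f‖ ‖v‖ ρ ≤ ρ/12 by the CFL condition, whatever the value of the
    nonlocal argument c.  These terms are absorbed by the viscous weights, so
    nonnegativity propagates from one time level to the next. *)
From HB Require Import structures.
From mathcomp Require Import all_boot all_order all_algebra.
From mathcomp Require Import all_classical all_reals all_analysis.
From mathcomp Require Import ring lra.
Import Order.TTheory GRing.Theory Num.Theory.
Import numFieldNormedType.Exports.
Local Open Scope classical_set_scope.
Local Open Scope ring_scope.

Section Positivity.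
Variable R : realType.

Lemma lax_friedrichs_update_ge0 (lam k a b c F1 F2 F3 F4 w1 w2 : R) :
  0 <= a -> 0 <= b -> 0 <= c -> lam * k = 6^-1 ->
  `|lam * F1 * w1| <= a / 12 -> `|lam * F2 * w1| <= b / 12 ->
  `|lam * F3 * w2| <= c / 12 -> `|lam * F4 * w2| <= a / 12 ->
  0 <= a - lam * (((F1 + F2) / 2 * w1 - k * (b - a)) - ((F3 + F4) / 2 * w2 - k * (a - c))).
Proof.
move=> a0 b0 c0 lamk /ler_normlP[? ?] /ler_normlP[? ?] /ler_normlP[? ?] /ler_normlP[? ?].
have -> : a - lam * (((F1 + F2) / 2 * w1 - k * (b - a)) - ((F3 + F4) / 2 * w2 - k * (a - c)))
  = a - (lam * F1 * w1 + lam * F2 * w1) / 2 + (lam * k) * (b - a)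
      + (lam * F3 * w2 + lam * F4 * w2) / 2 - (lam * k) * (a - c) by ring.
rewrite lamk; lra.
Qed.

Lemma bounded_derive_lipschitz (g : R -> R) (L x y : R) :
  (forall z, derivable g z 1) -> (forall z, `|derive1 g z| <= L) -> x <= y ->
  `|g y - g x| <= L * (y - x).
Proof.
move=> dg gL xy.
have [z _ ->] : exists2 z, z \in `[x, y]%R & g y - g x = derive1 g z * (y - x).
  apply: MVT_segment => //.
    by move=> z _; rewrite derive1E; exact: derivableP.
  apply: continuous_subspaceT => z.
  exact/differentiable_continuous/derivable1_diffP.
have yx0 : 0 <= y - x by rewrite subr_ge0.
by rewrite normrM (ger0_norm yx0) ler_wpM2r.
Qed.

Lemma le_supnorm (g : R -> R) (x : R) : bounded_fun g -> `|g x| <= supnorm g.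
Proof.
move=> [M [_ gM]]; apply: ub_le_sup; last by exists x.
exists (`|M| + 1) => _ [y _ <-]; apply: gM => //.
by rewrite (le_lt_trans (ler_norm _)) ?ltrDl.
Qed.

Lemma le_supnorm_drho (f : R -> R -> R -> R) (M t x r : R) :
  (forall t x r, 0 <= t -> `|pd 2 f t x r| <= M) -> 0 <= t ->
  `|pd 2 f t x r| <= supnorm_drho f.
Proof.
move=> fM t0; apply: ub_le_sup; last by exists (t, x, r).
by exists M => _ [p /= p0 <-]; exact: fM.
Qed.

Lemma cfl_convective_bound (lam L V : R) :
  0 <= lam -> 0 <= L -> 0 <= V -> lam * (1 + 2 * L) * V <= 6^-1 ->
  lam * L * V <= 12^-1.
Proof.
move=> lam0 L0 V0; have lamV0 : 0 <= lam * V by exact: mulr_ge0.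
have -> : lam * (1 + 2 * L) * V = lam * V + 2 * (lam * L * V) by ring.
lra.
Qed.

Lemma convective_term_le (lam L V F w r : R) :
  0 <= lam -> lam * L * V <= 12^-1 -> 0 <= r ->
  `|F| <= L * r -> `|w| <= V -> `|lam * F * w| <= r / 12.
Proof.
move=> lam0 LV r0 FL wV; rewrite !normrM (ger0_norm lam0).
apply: (@le_trans _ _ (lam * (L * r) * V)).
  by apply: ler_pM; rewrite ?mulr_ge0 ?ler_wpM2l.
have -> : lam * (L * r) * V = r * (lam * L * V) by ring.
by rewrite ler_wpM2l.
Qed.

End Positivity.

Theorem lemma2p2 (R : realType) (C : R) (f : R -> R -> R -> R) (v eta rho0 : R -> R)
  (h tau : R) (theta : nat -> int -> R) :
  0 < C ->
  C2_3 f ->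
  (exists M : R, forall t x r, 0 <= t -> `|pd 2 f t x r| <= M) ->
  (forall r t x, 0 <= t -> `|pd 1 f t x r| <= C * `|r|) ->
  (forall r t x, 0 <= t -> `|pd 1 (pd 1 f) t x r| <= C * `|r|) ->
  (forall t x, 0 <= t -> f t x 0 = 0) ->
  C2_1 v -> bounded_fun v -> bounded_fun (derive1 v) ->
  C2_1 eta -> bounded_fun eta -> bounded_fun (derive1 eta) -> bounded_fun (derive1 (derive1 eta)) ->
  Linfty rho0 ->
  0 < h -> 0 < tau ->
  h < C^-1 ->
  (tau / h) * (1 + 2 * supnorm_drho f) * supnorm v <= 6^-1 ->
  (forall n k, 0 <= theta n k <= 1) ->
  (forall j, 0 <= scheme f v eta rho0 h tau theta 0 j) ->
  forall (n : nat) (j : int), 0 <= scheme f v eta rho0 h tau theta n j.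
Proof.
move=> _ [_ [df _]] [M fM] _ _ f0 _ vb _ _ _ _ _ _ h0 tau0 _ cfl _ init.
set L := supnorm_drho f; set V := supnorm v.
have fL t x r : 0 <= t -> `|pd 2 f t x r| <= L by exact: le_supnorm_drho fM.
have vV x : `|v x| <= V by exact: le_supnorm.
have lam0 : 0 <= tau / h by rewrite divr_ge0 ?ltW.
have LV : (tau / h) * L * V <= 12^-1.
  apply: cfl_convective_bound cfl => //.
    exact: le_trans (fL 0 0 0 (lexx 0)).
  exact: le_trans (vV 0).
have f_le t x r : 0 <= t -> 0 <= r -> `|f t x r| <= L * r.
  move=> t0 r0; have := @bounded_derive_lipschitz _ (f t x) L 0 r.
  rewrite f0 // !subr0; apply=> // [z|z]; last exact: fL.
  by have [+ _] := df 2%N erefl; apply.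
elim=> [|n IH] j; first exact: init.
have t0 : 0 <= n%:R * tau by rewrite mulr_ge0 // ltW.
rewrite /= /numflux; apply: lax_friedrichs_update_ge0; rewrite ?IH //.
  by rewrite invfM mulrCA mulfV ?mulr1 // gt_eqF ?divr_gt0.
all: by apply: (@convective_term_le _ _ L V) => //; apply: f_le.
Qed.
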